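(* Let $p\ge2$ be an integer, $t_*,\rho\in\mathbb{R}$, and let $Y\subset\mathbb{R}$ be a set that is not bounded above. Let $X\subset\mathbb{R}$ contain $t_*+y$ for every $y\in Y$ with $y>\rho$. Let $\Lambda: X-Y\to[0,\infty)$ satisfy $\Lambda(t_* )>0$ and \[ \lim_{y\in Y,\ y\to\infty}\Lambda(x_0-y)\,\Lambda(t_*+y-y_0)=0 \quad\text{for all } x_0\in X,\ y_0\in Y. \] If $\det(\Lambda(x_j-y_k))_{j,k=1}^p\ge0$ for all $\mathbf{x}\in\operatorname{inc}(X,p)$ and $\mathbf{y}\in\operatorname{inc}(Y,p)$, then the kernel $X\times Y\to\mathbb{R}$, $(x,y)\mapsto\Lambda(x-y)$, is $\mathrm{TN}_p$.
   Context: For a totally ordered set $X$ and integer $r \geq 1$, $\operatorname{inc}(X,r)$ denotes the set of $r$-tuples $(x_1,\dots,x_r) \in X^r$ with $x_1 < \cdots < x_r$. $X-Y=\{x-y:x\in X,y\in Y\}$. For $X,Y \subset \mathbb{R}$, a kernel $K : X \times Y \to \mathbb{R}$ is $\mathrm{TN}_p$ if $\det (K(x_j,y_k))_{j,k=1}^r \geq 0$ for all $1 \leq r \leq p$ and all $\mathbf{x} \in \operatorname{inc}(X,r)$, $\mathbf{y} \in \operatorname{inc}(Y,r)$. *)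

From HB Require Import structures.
From mathcomp Require Import all_boot all_order all_algebra.
From mathcomp Require Import reals.
Set Implicit Arguments. Unset Strict Implicit. Unset Printing Implicit Defensive.
Import Order.TTheory GRing.Theory Num.Theory.
Local Open Scope ring_scope.

Definition inc (R : realType) (X : R -> Prop) (r : nat) (x : 'I_r -> R) : Prop :=
  (forall i, X (x i)) /\ (forall i j : 'I_r, (i < j)%N -> x i < x j).

Definition TN (R : realType) (X Y : R -> Prop) (K : R -> R -> R) (p : nat) : Prop :=
  forall (r : nat), (1 <= r)%N -> (r <= p)%N ->
  forall (x y : 'I_r -> R), inc X x -> inc Y y ->
    0 <= \det (\matrix_(j, k) K (x j) (y k)).

Definition in_diff (R : realType) (X Y : R -> Prop) (z : R) : Prop :=
  exists x y, X x /\ Y y /\ z = x - y.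

From HB Require Import structures.
From mathcomp Require Import all_boot all_order all_algebra.
From mathcomp Require Import reals.
From mathcomp Require Import zify ring lra.
Import Order.TTheory GRing.Theory Num.Theory.
Set Implicit Arguments. Unset Strict Implicit. Unset Printing Implicit Defensive.
Local Open Scope ring_scope.

(* Write P(m) for "every m x m minor det(Lambda(x_j - y_k)) with x in inc(X,m),
   y in inc(Y,m) is nonnegative".  P(p) is a hypothesis, and TN_p is the
   conjunction of P(r) for 1 <= r <= p, so it suffices to show P(r+1) -> P(r).
   Suppose some r x r minor A = (Lambda(x_j - y_k)) has det A < 0; then A is
   invertible.  Append a new row x_{r+1} = t_* + y' and column y_{r+1} = y' with
   y' in Y very large.  By the Schur complement formula the enlarged determinant
   is det A * (Lambda(t_* ) - c A^{-1} b), where b_j = Lambda(x_j - y') and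
   c_k = Lambda(t_* + y' - y_k).  Every product b_j c_k tends to 0 as y' grows
   (finitely many limits at once), so c A^{-1} b < Lambda(t_* ) for y' large,
   and the enlarged determinant is negative, contradicting P(r+1). *)

Lemma eventually_forall_fin (R : realDomainType) (T : finType) (Q : T -> R -> Prop) :
  (forall i, exists M, forall y, M < y -> Q i y) ->
  exists M, forall i y, M < y -> Q i y.
Proof.
move=> ev.
suff [M HM] : exists M, forall i, i \in enum T -> forall y, M < y -> Q i y.
  by exists M => i; apply: HM; rewrite mem_enum.
elim: (enum T) => [|a s [M HM]]; first by exists 0.
have [Ma HMa] := ev a.
exists (Num.max Ma M) => i; rewrite inE => /orP[/eqP-> | i_s] y;
  rewrite gt_max => /andP[lt_Ma lt_M]; [exact: HMa | exact: HM].
Qed.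

Definition append_last (R : Type) r (x : 'I_r -> R) (v : R) : 'I_(r + 1) -> R :=
  fun i => match split i with inl j => x j | inr _ => v end.

Lemma append_last_lshift (R : Type) r (x : 'I_r -> R) v a :
  append_last x v (lshift 1 a) = x a.
Proof. by rewrite /append_last -[lshift 1 a]/(unsplit (inl a)) unsplitK. Qed.

Lemma append_last_rshift (R : Type) r (x : 'I_r -> R) v a :
  append_last x v (rshift r a) = v.
Proof. by rewrite /append_last -[rshift r a]/(unsplit (inr a)) unsplitK. Qed.

Lemma inc_append_last (R : realType) (X : R -> Prop) r (x : 'I_r -> R) v :
  inc X x -> X v -> (forall i, x i < v) -> inc X (append_last x v).
Proof.
move=> [Xx x_incr] Xv x_lt_v; split.
  by move=> i; case: (split_ordP i) => a ->;
    rewrite ?append_last_lshift ?append_last_rshift.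
move=> i j; case: (split_ordP i) => a ->; case: (split_ordP j) => b ->;
  rewrite ?append_last_lshift ?append_last_rshift /= => lt_ij.
- exact: x_incr.
- exact: x_lt_v.
- by have := ltn_ord b; lia.
- by have := ltn_ord a; have := ltn_ord b; lia.
Qed.

Lemma kernel_mx_append_last (R : Type) r (f : R -> R -> R)
    (x y : 'I_r -> R) (u v : R) :
  \matrix_(j, k) f (append_last x u j) (append_last y v k) =
  block_mx (\matrix_(j, k) f (x j) (y k)) (\matrix_(j < r, l < 1) f (x j) v)
           (\matrix_(l < 1, k < r) f u (y k)) (\matrix_(l, m) f u v).
Proof.
apply/matrixP => i j; rewrite mxE.
by case: (split_ordP i) => a ->; case: (split_ordP j) => e ->;
  rewrite ?block_mxEul ?block_mxEur ?block_mxEdl ?block_mxEdr !mxE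
          ?append_last_lshift ?append_last_rshift.
Qed.

Lemma det_block_schur (F : fieldType) r (A : 'M[F]_r) (b : 'cV_r) (c : 'rV_r)
    (d : 'M_1) :
  A \in unitmx ->
  \det (block_mx A b c d) = \det A * (d 0 0 - (c *m invmx A *m b) 0 0).
Proof.
move=> unitA.
have -> : block_mx A b c d =
  block_mx 1%:M 0 (c *m invmx A) 1%:M *m block_mx A b 0 (d - c *m invmx A *m b).
  rewrite mulmx_block !mul1mx !mul0mx !addr0 mulmxKV // -mulmxA.
  congr block_mx; rewrite mulmxA; apply/matrixP => i j; rewrite !mxE; ring.
by rewrite det_mulmx det_lblock det_ublock !det1 !mul1r det_mx11 !mxE.
Qed.

Lemma bilinear_form_bound (R : realFieldType) r (N : 'M[R]_r) (b : 'cV_r)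
    (c : 'rV_r) (eps : R) :
  (forall i k, `|b k 0 * c 0 i| <= eps) ->
  (c *m N *m b) 0 0 <= eps * \sum_k \sum_i `|N i k|.
Proof.
move=> small; apply: le_trans (ler_norm _) _.
rewrite !mxE mulr_sumr; apply: le_trans (ler_norm_sum _ _ _) _.
apply: ler_sum => k _; rewrite !mxE mulr_suml mulr_sumr.
apply: le_trans (ler_norm_sum _ _ _) _; apply: ler_sum => i _.
rewrite mulrAC mulrC normrM mulrC.
by apply: ler_wpM2r => //; rewrite mulrC.
Qed.

Definition minors_nonneg (R : realType) (X Y : R -> Prop) (Lambda : R -> R)
    (m : nat) : Prop :=
  forall x y : 'I_m -> R, inc X x -> inc Y y ->
    0 <= \det (\matrix_(j, k) Lambda (x j - y k)).

Section Descent.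

Variables (R : realType) (tstar rho : R) (X Y : R -> Prop) (Lambda : R -> R).
Hypothesis Y_unbounded : forall M : R, exists y, Y y /\ M < y.
Hypothesis X_shift : forall y, Y y -> rho < y -> X (tstar + y).
Hypothesis Lambda_tstar_gt0 : 0 < Lambda tstar.
Hypothesis Lambda_decay : forall x0 y0, X x0 -> Y y0 ->
  forall eps : R, 0 < eps -> exists M : R, forall y, Y y -> M < y ->
    `|Lambda (x0 - y) * Lambda (tstar + y - y0)| < eps.

Lemma large_bordering_point r (x y : 'I_r -> R) (eps : R) :
  inc X x -> inc Y y -> 0 < eps ->
  exists y', [/\ Y y', rho < y', forall i, y i < y', forall k, x k < tstar + y'
    & forall i k, `|Lambda (x k - y') * Lambda (tstar + y' - y i)| < eps].
Proof.
move=> [Xx _] [Yy _] eps_gt0.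
pose Q (ik : 'I_r * 'I_r) (v : R) := [/\ Y v ->
  `|Lambda (x ik.2 - v) * Lambda (tstar + v - y ik.1)| < eps,
  y ik.1 < v & x ik.2 < tstar + v].
have [M HM] : exists M, forall ik v, M < v -> Q ik v.
  apply: eventually_forall_fin => -[i k].
  have [M0 HM0] := Lambda_decay (Xx k) (Yy i) eps_gt0.
  exists (Num.max M0 (Num.max (y i) (x k - tstar))) => v.
  rewrite !gt_max => /and3P[lt_M0 lt_yi lt_xk].
  by split=> //=; [move=> Yv; exact: HM0 | lra].
have [y' [Yy' ]] := Y_unbounded (Num.max M rho).
rewrite gt_max => /andP[lt_M lt_rho].
exists y'; split=> // [i | k | i k].
- by case: (HM (i, i) y' lt_M).
- by case: (HM (k, k) y' lt_M).
- by case: (HM (i, k) y' lt_M) => /(_ Yy').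
Qed.

Lemma minors_nonneg_descent r :
  minors_nonneg X Y Lambda (r + 1) -> minors_nonneg X Y Lambda r.
Proof.
move=> P_succ x y incx incy; rewrite leNgt; apply/negP => detA_lt0.
set A := \matrix_(j, k) Lambda (x j - y k) in detA_lt0.
have unitA : A \in unitmx by rewrite unitmxE unitfE ltr0_neq0.
set S := \sum_k \sum_i `|invmx A i k|.
have S_ge0 : 0 <= S by apply: sumr_ge0 => k _; apply: sumr_ge0.
set eps := Lambda tstar / (1 + S).
have eps_gt0 : 0 < eps by rewrite divr_gt0 // ltr_pwDl.
have [y' [Yy' rho_lt yi_lt xk_lt small]] :=
  large_bordering_point incx incy eps_gt0.
have incx' : inc X (append_last x (tstar + y')).
  by apply: inc_append_last => //; exact: X_shift.
have incy' : inc Y (append_last y y') by exact: inc_append_last.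
have := P_succ _ _ incx' incy'.
rewrite (kernel_mx_append_last (fun u v => Lambda (u - v))) det_block_schur //.
have corner : (\matrix_(l < 1, m < 1) Lambda (tstar + y' - y')) 0 0 = Lambda tstar.
  by rewrite mxE addrK.
rewrite corner nmulr_rge0 // subr_le0.
set b : 'cV_r := \matrix_(j < r, l < 1) Lambda (x j - y').
set c : 'rV_r := \matrix_(l < 1, k < r) Lambda (tstar + y' - y k).
have form_le : (c *m invmx A *m b) 0 0 <= eps * S.
  by apply: bilinear_form_bound => i k; rewrite !mxE; apply: ltW.
have epsS_lt : eps * S < Lambda tstar.
  rewrite /eps mulrAC ltr_pdivrMr; last by rewrite ltr_pwDl.
  by rewrite mulrDr mulr1 ltrDr.
lra.
Qed.

Lemma minors_nonneg_below p :
  minors_nonneg X Y Lambda p -> forall r, (r <= p)%N -> minors_nonneg X Y Lambda r.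
Proof.
move=> + r le_rp; rewrite -(subnKC le_rp).
elim: (p - r)%N => [|n IH]; first by rewrite addn0.
rewrite addnS -addn1 => /minors_nonneg_descent; exact: IH.
Qed.

End Descent.

Theorem mainTheorem19 (R : realType) (p : nat) (tstar rho : R)
  (X Y : R -> Prop) (Lambda : R -> R) :
  (2 <= p)%N ->
  (forall M : R, exists y, Y y /\ M < y) ->
  (forall y, Y y -> rho < y -> X (tstar + y)) ->
  (forall z, in_diff X Y z -> 0 <= Lambda z) ->
  0 < Lambda tstar ->
  (forall x0 y0, X x0 -> Y y0 ->
     forall eps : R, 0 < eps -> exists M : R, forall y, Y y -> M < y ->
       `|Lambda (x0 - y) * Lambda (tstar + y - y0)| < eps) ->
  (forall x y : 'I_p -> R, inc X x -> inc Y y ->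
     0 <= \det (\matrix_(j, k) Lambda (x j - y k))) ->
  TN X Y (fun x y => Lambda (x - y)) p.
Proof.
move=> _ Y_unbounded X_shift _ Lambda_tstar_gt0 Lambda_decay P_p r _ le_rp.
exact: (minors_nonneg_below Y_unbounded X_shift Lambda_tstar_gt0 Lambda_decay
          P_p le_rp).
Qed.
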